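(* Let $G$ be a graph, let $S$ be a minimal separator of $G$, let $\mu$ be a probability measure on $S$, and let $\alpha<1$ be a constant such that $\mu(N(v))<\alpha$ for every $v\in V(G)$. Let $A$ and $B$ be two full components of $G\setminus S$. If two vertices $x,y\in S$ are chosen independently at random according to $\mu$, then the probability that $(x,y)$ is not lucky with respect to $A$ is less than $6\alpha$ (and likewise with respect to $B$).
   Context: All graphs are finite, simple and undirected. $N(v)$ is the open neighbourhood of $v$ and $\mu(N(v))$ means $\mu(N(v)\cap S)$. For distinct $s,t\in V(G)$, $S$ is an $s$-$t$ separator if $s,t$ lie in different components of $G\setminus S$, minimal if no proper subset is an $s$-$t$ separator; $S$ is a minimal separator of $G$ if it is a minimal $s$-$t$ separator for some $s,t$. A component $C$ of $G\setminus S$ is full if every vertex of $S$ has a neighbour in $C$. A vertex $x\in S$ is lucky with respect to $A$ if there is an induced path on four vertices in $G$ with one endpoint $x$ and the remaining three vertices in $A$. A pair $(x,y)\in S\times S$ is lucky with respect to $A$ if $x$ is lucky with respect to $A$, or there exists an induced path on four vertices in $G$ with endpoints $x$ and $y$ and its two middle vertices in $A$. *)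

From mathcomp Require Import all_boot all_order all_algebra.
Set Implicit Arguments. Unset Strict Implicit. Unset Printing Implicit Defensive.
Import Order.TTheory GRing.Theory Num.Theory.

Section Graphs.
Variable T : finType.
Variable e : rel T.

Definition simple_graph := symmetric e /\ irreflexive e.

Definition del_rel (S : {set T}) : rel T :=
  [rel x y | [&& e x y, x \notin S & y \notin S]].

Definition component_of (S C : {set T}) : Prop :=
  exists2 v, v \notin S & C = [set u | (u \notin S) && connect (del_rel S) v u].

Definition st_separator (S : {set T}) (s t : T) : Prop :=
  [/\ s != t, s \notin S, t \notin S & ~~ connect (del_rel S) s t].

Definition minimal_st_separator (S : {set T}) (s t : T) : Prop :=
  st_separator S s t /\ forall S' : {set T}, S' \proper S -> ~ st_separator S' s t.

Definition minimal_separator (S : {set T}) : Prop :=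
  exists s t, minimal_st_separator S s t.

Definition full_component (S C : {set T}) : Prop :=
  component_of S C /\ forall x, x \in S -> exists2 y, y \in C & e x y.

Definition induced_P4 (a b c d : T) : bool :=
  [&& uniq [:: a; b; c; d], [&& e a b, e b c & e c d] &
      [&& ~~ e a c, ~~ e b d & ~~ e a d]].

Definition lucky_vertex (A : {set T}) (x : T) : bool :=
  [exists a, exists b, exists c, [&& a \in A, b \in A, c \in A & induced_P4 x a b c]].

Definition lucky_pair (A : {set T}) (x y : T) : bool :=
  lucky_vertex A x ||
  [exists a, exists b, [&& a \in A, b \in A & induced_P4 x a b y]].

End Graphs.

Definition prob_on {R : numDomainType} {T : finType} (S : {set T}) (mu : T -> R) : Prop :=
  [/\ (forall x, (0 <= mu x)%R), (forall x, x \notin S -> mu x = 0%R)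
    & (\sum_(x in S) mu x)%R = 1%R].

Definition mu_nbhd {R : numDomainType} {T : finType} (e : rel T) (S : {set T})
  (mu : T -> R) (v : T) : R := (\sum_(u in S | e v u) mu u)%R.

Definition prob_not_lucky {R : numDomainType} {T : finType} (e : rel T) (S A : {set T})
  (mu : T -> R) : R :=
  (\sum_(x in S) \sum_(y in S | ~~ lucky_pair e A x y) mu x * mu y)%R.

(* Fix v0 in A. If (x, y) is not lucky then neither is x, so every vertex of
   the connected set A is within distance two of x through A; and whenever
   x - w - p - q is a path with w, p, q in A and x adjacent to neither p nor q,
   the edge w q must be present (otherwise x w p q is an induced P4).  These two
   facts produce a vertex f(x) of A depending on x only, and three vertices
   g1(y), g2(y), g3(y) of A depending on y only, such that every non-lucky pair
   has x ~ y, y ~ f(x) or x ~ gi(y): if y reaches v0 within distance two, f and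
   the g's are steps towards v0; otherwise g(y) is a path y - g1 - g2 - g3 in A
   with g3 not within distance two of y through A.  Each of these five events has
   probability at most alpha, as it asks one of the two points to land in the
   neighbourhood of a vertex determined by the other one. *)
From mathcomp Require Import all_boot all_order all_algebra.
From mathcomp Require Import lra.
Import Order.TTheory GRing.Theory Num.Theory.
Set Implicit Arguments. Unset Strict Implicit. Unset Printing Implicit Defensive.

Section Components.
Variables (T : finType) (e : rel T).
Hypothesis e_sym : symmetric e.
Variables S C : {set T}.
Hypothesis C_comp : component_of e S C.

Lemma component_ind (P : pred T) b : b \in C -> P b ->
  {in C &, forall p q, e p q -> P p -> P q} -> {in C, forall u, P u}.
Proof.
case: C_comp => v vS ->; rewrite inE => /andP[bS vb] Pb Pe u.
rewrite inE => /andP[uS vu].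
have del_sym : connect_sym (del_rel e S).
  apply: sym_connect_sym => p q; rewrite /del_rel /= e_sym.
  by case: (p \in S); case: (q \in S).
have /connectP[p pth ->] : connect (del_rel e S) b u.
  by apply: connect_trans vu; rewrite del_sym.
elim: p b bS vb Pb pth => [//|c p IHp] b bS vb Pb /= /andP[bc pth].
case/and3P: (bc) => ebc _ cS.
have vc : connect (del_rel e S) v c := connect_trans vb (connect1 bc).
by apply: IHp => //; apply: (Pe b); rewrite ?inE ?bS ?cS.
Qed.

Lemma component_notin_sep : {in S, forall x, x \notin C}.
Proof. by case: C_comp => v _ -> x xS; rewrite inE xS. Qed.

Lemma component_nonempty : exists v, v \in C.
Proof. by case: C_comp => v vS ->; exists v; rewrite inE vS connect0. Qed.

End Components.

Section UnluckyPairs.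
Variables (T : finType) (e : rel T).
Hypotheses (e_sym : symmetric e) (e_irr : irreflexive e).
Variable A : {set T}.
Hypothesis A_ind : forall (P : pred T) b, b \in A -> P b ->
  {in A &, forall p q, e p q -> P p -> P q} -> {in A, forall u, P u}.

Lemma edge_neq x y : e x y -> x != y.
Proof. by apply: contraTneq => ->; rewrite e_irr. Qed.

Lemma induced_P4I a b c d : e a b -> e b c -> e c d ->
  ~~ e a c -> ~~ e b d -> ~~ e a d -> a != d -> induced_P4 e a b c d.
Proof.
move=> ab bc cd nac nbd nad ad; rewrite /induced_P4 ab bc cd nac nbd nad /=.
rewrite !inE !negb_or ad (edge_neq ab) (edge_neq bc) (edge_neq cd) /= !andbT.
by apply/andP; split; apply/eqP => E; subst; rewrite ?ab ?cd in nad.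
Qed.

Lemma lucky_vertexI x a b c : a \in A -> b \in A -> c \in A ->
  induced_P4 e x a b c -> lucky_vertex e A x.
Proof.
move=> aA bA cA P4; apply/existsP; exists a; apply/existsP; exists b.
by apply/existsP; exists c; rewrite aA bA cA.
Qed.

Lemma lucky_pairI x y a b : a \in A -> b \in A ->
  induced_P4 e x a b y -> lucky_pair e A x y.
Proof.
move=> aA bA P4; apply/orP; right.
by apply/existsP; exists a; apply/existsP; exists b; rewrite aA bA.
Qed.

Lemma unlucky_pair_vertex x y :
  ~~ lucky_pair e A x y -> ~~ lucky_vertex e A x.
Proof. by rewrite negb_or => /andP[]. Qed.

Lemma unlucky_common_nbr x w p q : x \notin A -> ~~ lucky_vertex e A x ->
  w \in A -> p \in A -> q \in A -> e x w -> e w p -> e p q ->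
  ~~ e x p -> ~~ e x q -> e w q.
Proof.
move=> xA unl wA pA qA xw wp pq xp xq; apply/negPn/negP => wq.
case/negP: unl; apply: (lucky_vertexI wA pA qA); apply: induced_P4I => //.
by apply: contraNneq xA => ->.
Qed.

Definition within2 x u := e x u || [exists w in A, e x w && e w u].

Lemma unlucky_within2 x : x \notin A -> (exists2 a, a \in A & e x a) ->
  ~~ lucky_vertex e A x -> {in A, forall u, within2 x u}.
Proof.
move=> xA [a aA xa] unl; apply: (A_ind aA); first by rewrite /within2 xa.
move=> p q pA qA pq /orP[xp | /existsP[w /and3P[wA xw wp]]].
  by apply/orP; right; apply/existsP; exists p; rewrite pA xp pq.
rewrite /within2; case xq: (e x q) => //=; apply/existsP.
case wq: (e w q); first by exists w; rewrite wA xw wq.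
case xp: (e x p); first by exists p; rewrite pA xp pq.
case/negP: unl; apply: (lucky_vertexI wA pA qA).
by apply: induced_P4I; rewrite ?xp ?wq ?xq //; apply: contraNneq xA => ->.
Qed.

(* Stepping onto v0 itself whenever possible ensures that otherwise x is not
   adjacent to v0, which the induced P4s of [unlucky_near] rely on. *)
Definition toward v0 x w := e x w && (if e x v0 then w == v0 else e w v0).

Definition pick_toward v0 x := odflt v0 [pick w in A | toward v0 x w].

Lemma pick_towardP v0 x : v0 \in A -> within2 x v0 ->
  pick_toward v0 x \in A /\ toward v0 x (pick_toward v0 x).
Proof.
move=> v0A x_v0; rewrite /pick_toward; case: pickP => [w /andP[]//|none].
exfalso; move: x_v0; rewrite /within2.
case xv0: (e x v0) => /=; first by move: (none v0); rewrite /toward v0A xv0 eqxx.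
case/existsP => t /and3P[tA xt tv0].
by move: (none t); rewrite /toward tA xt xv0 tv0.
Qed.

Lemma unlucky_near x y v0 w t : x \notin A -> y \notin A -> x != y ->
  ~~ e x y -> ~~ lucky_pair e A x y -> v0 \in A -> w \in A -> t \in A ->
  toward v0 x w -> toward v0 y t -> e y w || e x t.
Proof.
move=> xA yA xy nxy unl v0A wA tA /andP[xw Hw] /andP[yt Ht].
apply/norP => -[yw xt].
have no_P4 a b : a \in A -> b \in A -> e x a -> e a b -> e b y ->
    ~~ e x b -> ~~ e a y -> False.
  move=> aA bA xa ab b_y xb ay; case/negP: unl.
  exact/(lucky_pairI aA bA)/induced_P4I.
case: ifP Hw => xv0 Hw; case: ifP Ht => yv0 Ht.
- by move: xt; rewrite (eqP Ht) xv0.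
- move/eqP: Hw => Hw; subst w.
  by apply: (no_P4 v0 t); rewrite // e_sym ?yv0 ?Ht.
- move/eqP: Ht => Ht; subst t.
  by apply: (no_P4 w v0); rewrite // ?xv0 // e_sym.
- have wt : e w t.
    by apply: (unlucky_common_nbr xA (unlucky_pair_vertex unl) wA v0A tA);
      rewrite // ?xv0 // e_sym.
  by apply: (no_P4 w t); rewrite // e_sym.
Qed.

Definition far_path y (g : T * T * T) :=
  let: (a, b, c) := g in
  [&& a \in A, b \in A, c \in A, e y a, e a b, e b c & ~~ within2 y c].

Lemma far_path_exists y v0 : (exists2 a, a \in A & e y a) -> v0 \in A ->
  ~~ within2 y v0 -> exists g, far_path y g.
Proof.
move=> [a aA ya] v0A; case: (pickP (far_path y)) => [g fg _|nofar].
  by exists g.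
case/negP; apply: (A_ind aA) => //; first by rewrite /within2 ya.
move=> p q pA qA pq /orP[yp | /existsP[h /and3P[hA yh hp]]].
  by apply/orP; right; apply/existsP; exists p; rewrite pA yp pq.
apply/negPn/negP => yq.
by move: (nofar (h, p, q)); rewrite /far_path hA pA qA yh hp pq yq.
Qed.

Lemma unlucky_far x y g1 g2 g3 : x \notin A -> (exists2 a, a \in A & e x a) ->
  x != y -> ~~ e x y -> ~~ lucky_pair e A x y -> far_path y (g1, g2, g3) ->
  [|| e x g1, e x g2 | e x g3].
Proof.
move=> xA x_nbr xy nxy unl /and4P[g1A g2A g3A /and4P[yg1 g12 g23 far]].
have unlx := unlucky_pair_vertex unl.
apply/norP => -[xg1 /norP[xg2 xg3]].
have /orP[|/existsP[w /and3P[wA xw wg2]]] :=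
  unlucky_within2 xA x_nbr unlx g2A; first exact/negP.
have wg1 : e w g1.
  by apply: (unlucky_common_nbr xA unlx wA g2A g1A); rewrite // e_sym.
have wg3 : e w g3 by apply: (unlucky_common_nbr xA unlx wA g2A g3A).
have yw : e y w.
  apply/negPn/negP => yw; case/negP: unl; apply: (lucky_pairI wA g1A).
  by apply: induced_P4I; rewrite // e_sym.
by case/negP: far; apply/orP; right; apply/existsP; exists w; rewrite wA yw wg3.
Qed.

Definition witness_triple v0 y : T * T * T :=
  if within2 y v0 then (pick_toward v0 y, pick_toward v0 y, pick_toward v0 y)
  else odflt (v0, v0, v0) [pick g | far_path y g].

Lemma unlucky_cover v0 x y : v0 \in A -> x \notin A -> y \notin A ->
  (exists2 a, a \in A & e x a) -> (exists2 a, a \in A & e y a) ->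
  ~~ lucky_pair e A x y ->
  [|| e x y, e y (pick_toward v0 x), e x (witness_triple v0 y).1.1,
      e x (witness_triple v0 y).1.2 | e x (witness_triple v0 y).2].
Proof.
move=> v0A xA yA x_nbr y_nbr unl.
have unlx := unlucky_pair_vertex unl.
have [wA xw] := pick_towardP v0A (unlucky_within2 xA x_nbr unlx v0A).
case: (eqVneq x y) => [<-|xy]; first by rewrite (andP xw).1 orbT.
case: (boolP (e x y)) => //= nxy.
rewrite /witness_triple; case: ifP => y_v0 /=.
  have [tA yt] := pick_towardP v0A y_v0.
  by case/orP: (unlucky_near xA yA xy nxy unl v0A wA tA xw yt) => ->;
    rewrite ?orbT.
have [g fg] := far_path_exists y_nbr v0A (negbT y_v0).
case: pickP => [[[g1 g2] g3] fg' | /(_ g)]; last by rewrite fg.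
by case/or3P: (unlucky_far xA x_nbr xy nxy unl fg') => ->; rewrite ?orbT.
Qed.

End UnluckyPairs.

Local Open Scope ring_scope.

Section PairMass.
Variables (R : numDomainType) (T : finType) (S : {set T}) (mu : T -> R).
Hypothesis mu_ge0 : forall x, 0 <= mu x.

Definition pair_mass (P : rel T) := \sum_(x in S) \sum_(y in S | P x y) mu x * mu y.

Lemma pair_mass_swap (P : rel T) : pair_mass P = pair_mass (fun x y => P y x).
Proof.
rewrite /pair_mass; under eq_bigr do rewrite big_mkcondr.
rewrite exchange_big /=; apply: eq_bigr => y _; rewrite big_mkcondr.
by apply: eq_bigr => x _; rewrite mulrC.
Qed.

Lemma pair_mass_sub (P Q : rel T) : {in S &, forall x y, P x y -> Q x y} ->
  pair_mass P <= pair_mass Q.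
Proof.
move=> PQ; apply: ler_sum => x xS; rewrite !big_mkcondr /=.
apply: ler_sum => y yS; case Pxy: (P x y); first by rewrite (PQ x y xS yS Pxy).
by case: (Q x y); rewrite ?mulr_ge0.
Qed.

Lemma pair_mass_or (P Q : rel T) a b : pair_mass P <= a -> pair_mass Q <= b ->
  pair_mass (fun x y => P x y || Q x y) <= a + b.
Proof.
move=> Pa Qb; apply: le_trans (lerD Pa Qb); rewrite -big_split /=.
apply: ler_sum => x _; rewrite !big_mkcondr -big_split /=.
apply: ler_sum => y _; have := mulr_ge0 (mu_ge0 x) (mu_ge0 y).
by case: (P x y); case: (Q x y) => /= m_ge0; rewrite ?addr0 ?add0r ?lerDl.
Qed.

Lemma pair_mass_nbhd (e : rel T) (h : T -> T) alpha :
  \sum_(x in S) mu x = 1 -> (forall v, mu_nbhd e S mu v <= alpha) ->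
  pair_mass (fun x y => e (h x) y) <= alpha.
Proof.
move=> mu1 nbhd_le; apply: (@le_trans _ _ (\sum_(x in S) mu x * alpha)).
  apply: ler_sum => x _; rewrite -mulr_sumr ler_wpM2l //; exact: nbhd_le.
by rewrite -mulr_suml mu1 mul1r.
Qed.

End PairMass.

Lemma prob_not_lucky_lt (R : realFieldType) (T : finType) (e : rel T)
  (S A : {set T}) (mu : T -> R) (alpha : R) :
  simple_graph e -> prob_on S mu -> (forall v, mu_nbhd e S mu v < alpha) ->
  full_component e S A -> prob_not_lucky e S A mu < 6%:R * alpha.
Proof.
move=> [e_sym e_irr] [mu_ge0 _ mu1] nbhd_lt [A_comp A_full].
have [v0 v0A] := component_nonempty A_comp.
have nbhd_le v : mu_nbhd e S mu v <= alpha by exact: ltW.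
have alpha_gt0 : 0 < alpha.
  by apply: le_lt_trans (nbhd_lt v0); apply: sumr_ge0 => u _.
have mass_l h := pair_mass_nbhd mu_ge0 h mu1 nbhd_le.
have mass_r h : pair_mass S mu (fun x y => e x (h y)) <= alpha.
  rewrite pair_mass_swap; apply: le_trans (mass_l h).
  by apply: pair_mass_sub => // x y _ _; rewrite e_sym.
pose g := witness_triple e A v0.
have cover : {in S &, forall x y, ~~ lucky_pair e A x y ->
    [|| e x y, e (pick_toward e A v0 x) y, e x (g y).1.1,
        e x (g y).1.2 | e x (g y).2]}.
  move=> x y xS yS; rewrite [e (pick_toward _ _ _ _) y]e_sym.
  apply: (unlucky_cover e_sym e_irr (component_ind e_sym A_comp)) => //;
    by [apply: (component_notin_sep A_comp) | apply: A_full].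
apply: le_lt_trans (pair_mass_sub mu_ge0 cover) _.
apply: le_lt_trans (pair_mass_or mu_ge0 (mass_l id)
  (pair_mass_or mu_ge0 (mass_l (pick_toward e A v0))
  (pair_mass_or mu_ge0 (mass_r (fun y => (g y).1.1))
  (pair_mass_or mu_ge0 (mass_r (fun y => (g y).1.2)) (mass_r (fun y => (g y).2)))))) _.
lra.
Qed.

Theorem lemma1 (R : realFieldType) (T : finType) (e : rel T) (S A B : {set T})
  (mu : T -> R) (alpha : R) :
  simple_graph e ->
  minimal_separator e S ->
  prob_on S mu ->
  alpha < 1 ->
  (forall v : T, mu_nbhd e S mu v < alpha) ->
  full_component e S A -> full_component e S B ->
  prob_not_lucky e S A mu < 6%:R * alpha /\ prob_not_lucky e S B mu < 6%:R * alpha.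
Proof.
move=> G _ mu_prob _ nbhd_lt A_full B_full.
by split; apply: prob_not_lucky_lt G mu_prob nbhd_lt _.
Qed.
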